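(* Let $a$ be a non-degenerate arrow environment and let $(X_t)$ be the walk on $a$ started at $0$. Let $Z^+$ and $Z^-$ be the processes on $a$ with initial values $Z^+_0=Z^-_0=1$. Then $T_{-1}<\infty$ if and only if $Z^+_n=0$ for some $n$, and $T_1<\infty$ if and only if $Z^-_n=0$ for some $n$.
   Context: Notation: $\mathbb N=\{1,2,\dots\}$, $\mathbb Z_+=\{0,1,2,\dots\}$. An arrow environment is $a\in\{0,1\}^{\mathbb Z\times\mathbb N}$. The walk on $a$ started at $x$ is the deterministic sequence with $X_0=x$ and $X_n=X_{n-1}+1$ if $a(X_{n-1},k)=1$, $X_n=X_{n-1}-1$ if $a(X_{n-1},k)=0$, where $k=\#\{j\le n-1:X_j=X_{n-1}\}$. For $m\in\mathbb Z$, $T_m=\inf\{t\ge0:X_t=m\}$. A sequence $b\in\{0,1\}^{\mathbb N}$ is non-degenerate if $b(i)\ne b(i+1)$ for infinitely many $i$; $a$ is non-degenerate if every $a(x,\cdot)$ is. For non-degenerate $b$: $U^+_b(0)=0$ and for $x\ge1$, $U^+_b(x)$ is the number of indices $i$ with $b(i)=1$ that precede the $x$-th index $j$ with $b(j)=0$; $U^-_b(x)$ is defined the same way with the roles of $0$ and $1$ exchanged. For non-degenerate $a$ and $y\in\mathbb Z_+$, the processes with initial value $y$ are $Z^+_0=y$, $Z^+_n=U^+_{a(n-1,\cdot)}(Z^+_{n-1})$ and $Z^-_0=y$, $Z^-_n=U^-_{a(1-n,\cdot)}(Z^-_{n-1})$ for $n\ge1$. *)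

From Stdlib Require Import ClassicalEpsilon.
From mathcomp Require Import all_boot all_order all_algebra.
Set Implicit Arguments. Unset Strict Implicit. Unset Printing Implicit Defensive.
Import GRing.Theory Num.Theory.

(* An arrow environment a : Z x N -> {0,1}; true = 1 (step right), false = 0.
   Only the values a x k with k >= 1 are relevant. *)
Definition arrow_env := int -> nat -> bool.

Fixpoint walk_path (a : arrow_env) (x : int) (n : nat) : seq int :=
  match n with
  | 0 => [:: x]
  | n'.+1 =>
      let p := walk_path a x n' in
      let y := last x p in
      let k := count (pred1 y) p in   (* k = #{j <= n' : X_j = X_{n'}} *)
      rcons p (if a y k then (y + 1)%R else (y - 1)%R)
  end.

Definition walk (a : arrow_env) (x : int) (n : nat) : int := last x (walk_path a x n).

Definition hits (a : arrow_env) (x m : int) : Prop := exists t, walk a x t = m.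

(* non-degenerate sequences b : N -> {0,1} (indices from 1) *)
Definition nondeg_seq (b : nat -> bool) : Prop :=
  forall N, exists i, (N <= i)%N /\ (1 <= i)%N /\ b i <> b i.+1.

Definition nondeg_env (a : arrow_env) : Prop := forall x, nondeg_seq (a x).

Definition cnt_before (b : nat -> bool) (v : bool) (j : nat) : nat :=
  \sum_(1 <= i < j) (b i == v).

Definition is_xth (b : nat -> bool) (v : bool) (x j : nat) : Prop :=
  (1 <= j)%N /\ b j = v /\ cnt_before b v j = x.-1.

Definition xth_index (b : nat -> bool) (v : bool) (x : nat) : nat :=
  epsilon (inhabits 0%N) (is_xth b v x).

Definition Uplus (b : nat -> bool) (x : nat) : nat :=
  if x is 0 then 0 else cnt_before b true (xth_index b false x).
Definition Uminus (b : nat -> bool) (x : nat) : nat :=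
  if x is 0 then 0 else cnt_before b false (xth_index b true x).

Fixpoint Zplus (a : arrow_env) (y : nat) (n : nat) : nat :=
  match n with
  | 0 => y
  | n'.+1 => Uplus (a (Posz n')) (Zplus a y n')
  end.
Fixpoint Zminus (a : arrow_env) (y : nat) (n : nat) : nat :=
  match n with
  | 0 => y
  | n'.+1 => Uminus (a (- Posz n')%R) (Zminus a y n')
  end.

From Stdlib Require Import ClassicalEpsilon PropExtensionality FunctionalExtensionality.
From mathcomp Require Import all_boot all_order all_algebra.
From mathcomp Require Import zify.
Set Implicit Arguments. Unset Strict Implicit. Unset Printing Implicit Defensive.
Import GRing.Theory Num.Theory.

(* For the walk X started at 0, let L_y(t) (resp. R_y(t)) be the
   number of left (resp. right) jumps made from site y before time t; these
   are the numbers of 0- (resp. 1-) arrows among the first visits(y,t) arrows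
   of a(y,.).  Counting crossings of the edge {y, y+1} gives the balance
     R_y(t) + [y < 0] = L_(y+1)(t) + [y < X_t].
   (=>) At the first hitting time T of -1 the walk left every site y >= 0
   through a 0-arrow, so R_y(T) = U^+_{a(y,.)}(L_y(T)); with L_0(T) = 1 the
   balance turns (L_y(T))_y into (Z^+_y)_y, and L_(T+1)(T) = 0.
   (<=) If -1 is never hit, induction on t shows that the walk never uses an
   arrow at y >= 0 beyond the Z^+_y-th 0-arrow of a(y,.) (its "budget");
   if Z^+_N = 0, site N is never visited, so the walk is confined to [0, N)
   with bounded local times: impossible for infinitely many steps.
   The statement for T_1 and Z^- follows by the mirror symmetry x -> -x,
   which flips all arrows and turns U^- into U^+. *)

Section PrefixCounts.
Variable b : nat -> bool.

Lemma cnt_before_small v j : j <= 1 -> cnt_before b v j = 0.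
Proof. by move=> hj; rewrite /cnt_before big_geq. Qed.

Lemma cnt_beforeS v j : 0 < j -> cnt_before b v j.+1 = cnt_before b v j + (b j == v).
Proof. by move=> hj; rewrite /cnt_before big_nat_recr. Qed.

Lemma cnt_before_mono v : {homo cnt_before b v : j k / j <= k}.
Proof.
move=> j k /subnK <-; elim: (k - j) => [//|d IH].
rewrite addSn; case: (posnP (d + j)) => [dj0|dj_pos].
  have j0 : j = 0 by lia.
  by rewrite dj0 j0 !cnt_before_small.
by rewrite cnt_beforeS //; apply: leq_trans IH (leq_addr _ _).
Qed.

Lemma is_xth_uniq v m j1 j2 : is_xth b v m j1 -> is_xth b v m j2 -> j1 = j2.
Proof.
wlog le12 : j1 j2 / j1 <= j2.
  by move=> W h1 h2; case: (leqP j1 j2) => [|/ltnW] hle; [|symmetry]; apply: W.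
move=> [h1 [e1 c1]] [_ [_ c2]]; apply/eqP; rewrite eqn_leq le12 leqNgt /=.
apply/negP => lt12; have := cnt_before_mono v lt12.
by rewrite cnt_beforeS // e1 eqxx c1 c2; lia.
Qed.

Lemma xth_index_eq v m j : is_xth b v m j -> xth_index b v m = j.
Proof. by move=> hj; apply: (is_xth_uniq _ hj); apply: epsilon_spec; exists j. Qed.

Definition ends_at_zero (r : nat) : bool := (r == 0) || ~~ b r.

Lemma Uplus_ends_at_zero r :
  ends_at_zero r -> Uplus b (cnt_before b false r.+1) = cnt_before b true r.+1.
Proof.
case: (posnP r) => [-> _|r_pos /orP[/eqP r0|/negbTE br]].
- by rewrite !cnt_before_small.
- by rewrite r0 in r_pos.
rewrite !cnt_beforeS // br /= addn0 addn1 /=.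
by rewrite (@xth_index_eq _ _ r).
Qed.

Hypothesis b_nondeg : nondeg_seq b.

Lemma zeros_unbounded m : exists j, m <= cnt_before b false j.
Proof.
elim: m => [|m [j hj]]; first by exists 0.
have [i [le_ji [i_pos bi]]] : exists i, j <= i /\ 0 < i /\ b i = false.
  have [i [le_ji [i_pos bi]]] := b_nondeg j.
  case E: (b i); last by exists i.
  case E': (b i.+1); first by rewrite E E' in bi.
  by exists i.+1; split; [lia|split].
exists i.+1; rewrite cnt_beforeS // bi eqxx addn1 ltnS.
exact: leq_trans hj (cnt_before_mono _ le_ji).
Qed.

Lemma zero_reached m : exists r, ends_at_zero r /\ cnt_before b false r.+1 = m.
Proof.
case: (posnP m) => [->|m_pos]; first by exists 0; rewrite cnt_before_small.
have [j m_le jmin] := ex_minnP (zeros_unbounded m).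
have [r jr] : exists r, j = r.+1.
  by case: j m_le jmin => [|r]; [rewrite cnt_before_small; lia|exists r].
have r_pos : 0 < r.
  by case: r jr => [|r] jr //; move: m_le; rewrite jr cnt_before_small; lia.
have lt_r : cnt_before b false r < m by rewrite ltnNge; apply/negP => /jmin; lia.
move: m_le; rewrite jr cnt_beforeS //; case E: (b r) => /= m_le; first by lia.
by exists r; rewrite /ends_at_zero E orbT cnt_beforeS // E /=; lia.
Qed.
End PrefixCounts.

(* The position of the m-th 0-arrow of b (0 when m = 0), for b non-degenerate. *)
Definition zero_pos (b : nat -> bool) (m : nat) : nat :=
  epsilon (inhabits 0) (fun r => ends_at_zero b r /\ cnt_before b false r.+1 = m).

Lemma zero_posP b m : nondeg_seq b ->
  ends_at_zero b (zero_pos b m) /\ cnt_before b false (zero_pos b m).+1 = m.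
Proof. by move=> hb; exact: (epsilon_spec _ _ (zero_reached hb m)). Qed.

Lemma zero_pos0 b : nondeg_seq b -> zero_pos b 0 = 0.
Proof.
move=> hb; have [/orP[/eqP //|/negbTE br] no_zero] := zero_posP 0 hb.
case: (posnP (zero_pos b 0)) => [//|r_pos].
by move: no_zero; rewrite cnt_beforeS // br eqxx addn1.
Qed.

Lemma Uplus_zero_pos b m :
  nondeg_seq b -> Uplus b m = cnt_before b true (zero_pos b m).+1.
Proof.
by move=> hb; have [end0 {1}<-] := zero_posP m hb; rewrite Uplus_ends_at_zero.
Qed.

Section Walk.
Local Open Scope ring_scope.
Variables (a : arrow_env) (x : int).

(* visits y t = #{j < t : X_j = y}; the walk uses arrow (visits y t).+1 at time t. *)
Fixpoint visits (y : int) (t : nat) : nat :=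
  if t is t'.+1 then (visits y t' + (walk a x t' == y))%N else 0%N.

Lemma walk_pathS n : walk_path a x n.+1 = rcons (walk_path a x n) (walk a x n.+1).
Proof. by rewrite /walk /= last_rcons. Qed.

Lemma count_walk_path y t :
  count (pred1 y) (walk_path a x t) = (visits y t + (walk a x t == y))%N.
Proof.
elim: t => [|t IH]; first by rewrite /= addn0.
by rewrite walk_pathS -cats1 count_cat IH /=; lia.
Qed.

Lemma walk_step t : walk a x t.+1 =
  let y := walk a x t in if a y (visits y t).+1 then y + 1 else y - 1.
Proof. by rewrite [LHS]/walk /= last_rcons count_walk_path eqxx addn1. Qed.

(* Numbers of jumps y -> y+1 and y -> y-1 before time t: the 1- and
   0-arrows among the arrows already used at y. *)
Definition right_jumps (y : int) (t : nat) : nat := cnt_before (a y) true (visits y t).+1.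
Definition left_jumps (y : int) (t : nat) : nat := cnt_before (a y) false (visits y t).+1.

Lemma right_jumpsS y t : right_jumps y t.+1 =
  (right_jumps y t + ((walk a x t == y) && a y (visits y t).+1))%N.
Proof.
rewrite /right_jumps /=; case: eqP => _ /=; last by rewrite !addn0.
by rewrite addn1 cnt_beforeS // eqb_id.
Qed.

Lemma left_jumpsS y t : left_jumps y t.+1 =
  (left_jumps y t + ((walk a x t == y) && ~~ a y (visits y t).+1))%N.
Proof.
rewrite /left_jumps /=; case: eqP => _ /=; last by rewrite !addn0.
by rewrite addn1 cnt_beforeS // eqbF_neg.
Qed.

(* Edge {y, y+1} is crossed alternately, so the numbers of crossings in both
   directions differ by the change of side between time 0 and time t. *)
Lemma crossing_balance y t :
  (right_jumps y t + (y < x)) = (left_jumps (y + 1) t + (y < walk a x t)) :> nat.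
Proof.
elim: t => [|t IH]; first by rewrite /right_jumps /left_jumps !cnt_before_small.
move: IH; rewrite right_jumpsS left_jumpsS walk_step /=.
move: (walk a x t) => z.
case: (eqVneq z y) => [->|z_ne_y].
  have -> : (y == y + 1) = false by apply/eqP; lia.
  by case: (a y _) => /=; lia.
case: (eqVneq z (y + 1)) => [->|z_ne_y1]; first by case: (a (y + 1) _) => /=; lia.
by case: (a z _) => /=; lia.
Qed.

Lemma last_exit_left y t :
  walk a x t < y -> (0 < visits y t)%N -> a y (visits y t) = false.
Proof.
elim: t => [|t IH] //=; rewrite walk_step /=.
case: (eqVneq (walk a x t) y) => [->|ne] /=.
  by rewrite addn1; case: (a y _) => //=; lia.
rewrite addn0 => lt_y; apply: IH; move: lt_y; case: (a _ _); lia.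
Qed.

Lemma visits_unvisited y t :
  (forall j, (j < t)%N -> walk a x j != y) -> visits y t = 0%N.
Proof.
elim: t => [|t IH] //= H.
by rewrite IH => [|j hj]; [rewrite (negbTE (H t _))|apply: H; lia].
Qed.

Lemma walk_le t : walk a x t <= x + t%:Z.
Proof.
elim: t => [|t IH] /=; first by rewrite addr0.
by rewrite walk_step /=; case: (a _ _); lia.
Qed.

Lemma visits_sum (N t : nat) : (forall j, (j < t)%N -> 0 <= walk a x j < N%:Z) ->
  (\sum_(0 <= y < N) visits y%:Z t)%N = t.
Proof.
elim: t => [|t IH] hN; first by rewrite big1.
rewrite /= big_split /= IH => [|j hj]; last by apply: hN; lia.
have /andP[+ +] := hN t (ltnSn t); case: (walk a x t) => [k|k] //= _ lt_kN.
suff -> : (\sum_(0 <= y < N) (Posz k == y%:Z : nat))%N = 1%N by rewrite addn1.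
elim: N lt_kN {hN IH} => [|M IHM] lt_kM; first by lia.
rewrite big_nat_recr //= eqz_nat; case: (ltngtP k M) => [lt_kM'|gt_kM|->].
- by rewrite IHM.
- by lia.
rewrite addn1 big1_seq // => y /andP[_]; rewrite mem_index_iota => /andP[_ lt_yM].
by rewrite eqz_nat gtn_eqF.
Qed.
End Walk.

Section HitImpliesExtinction.
Local Open Scope ring_scope.
Variables (a : arrow_env) (T : nat).
Hypothesis hit_T : walk a 0 T = -1.
Hypothesis before_T : forall t, (t < T)%N -> walk a 0 t != -1.

Lemma left_jumps_first_hit (y : nat) : left_jumps a 0 y T = Zplus a 1 y.
Proof.
elim: y => [|y IH].
  have := crossing_balance a 0 (-1) T.
  rewrite /right_jumps visits_unvisited // cnt_before_small // hit_T.
  by rewrite (_ : -1 + 1 = 0%N :> int) //=; lia.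
have balance : right_jumps a 0 y T = left_jumps a 0 (y%:Z + 1) T.
  by have := crossing_balance a 0 y T; rewrite hit_T /=; lia.
have -> : y.+1%:Z = y%:Z + 1 by lia.
rewrite -balance /= -IH /right_jumps /left_jumps Uplus_ends_at_zero //.
rewrite /ends_at_zero; case: (posnP (visits a 0 y T)) => [->//|visited].
by rewrite last_exit_left // hit_T.
Qed.

(* Site T+1 is out of reach before time T, so Z^+ dies by generation T+1. *)
Lemma Zplus_extinct_at_first_hit : Zplus a 1 T.+1 = 0%N.
Proof.
rewrite -left_jumps_first_hit /left_jumps visits_unvisited ?cnt_before_small //.
by move=> j lt_jT; apply/eqP => hj; have := walk_le a 0 j; rewrite hj; lia.
Qed.
End HitImpliesExtinction.

Lemma Zplus_extinct_of_hit a : hits a 0 (-1)%R -> exists n, Zplus a 1 n = 0%N.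
Proof.
move=> [t0 hit0]; have hit_once : exists t, walk a 0 t == (-1)%R by exists t0; apply/eqP.
have [T /eqP hit_T before_T] := ex_minnP hit_once.
exists T.+1; apply: (Zplus_extinct_at_first_hit hit_T) => t lt_tT.
by apply/negP => /before_T; lia.
Qed.

(* The budget of site y: the position in a(y,.) of the Z^+_y-th 0-arrow,
   which the walk never exceeds while -1 is not hit. *)
Definition budget (a : arrow_env) (y : nat) : nat := zero_pos (a (Posz y)) (Zplus a 1 y).

Section ExtinctionImpliesHit.
Local Open Scope ring_scope.
Variable a : arrow_env.
Hypothesis a_nondeg : nondeg_env a.
Hypothesis never_hits : forall t, walk a 0 t != -1.

Lemma walk_nonneg t : 0 <= walk a 0 t.
Proof.
elim: t => [//|t IH]; have := never_hits t.+1.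
by rewrite walk_step /=; case: (a _ _); lia.
Qed.

Lemma left_jumps_origin t : left_jumps a 0 0 t = 0%N.
Proof.
have above : -1 < walk a 0 t by have := walk_nonneg t; lia.
have := crossing_balance a 0 (-1) t.
rewrite /right_jumps visits_unvisited => [|j _]; last exact: never_hits.
by rewrite cnt_before_small // addNr above /= => /eqP; rewrite eqn_add2r eq_sym => /eqP.
Qed.

Lemma right_jumps_within_budget t (y : nat) :
  (visits a 0 y t <= budget a y)%N -> (right_jumps a 0 y t <= Zplus a 1 y.+1)%N.
Proof. by move=> le_vb; rewrite /= Uplus_zero_pos //; apply: cnt_before_mono. Qed.

Lemma left_jumps_at_budget t (y : nat) :
  visits a 0 y t = budget a y -> left_jumps a 0 y t = Zplus a 1 y.
Proof. by rewrite /left_jumps => ->; have [] := zero_posP (Zplus a 1 y) (a_nondeg y). Qed.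

(* Main invariant: each site y >= 0 is never visited more often than its
   budget; an extra visit would need more right jumps from y-1 than allowed. *)
Lemma visits_within_budget t (y : nat) : (visits a 0 y t <= budget a y)%N.
Proof.
elim: t y => [//|t IH] y /=.
case: (eqVneq (walk a 0 t) y) => [at_y|_]; last by rewrite addn0.
rewrite addn1 ltn_neqAle IH andbT; apply/eqP => at_budget.
have spent := left_jumps_at_budget at_budget.
case: y at_y at_budget spent => [|y] at_y _ spent.
  by move: spent; rewrite left_jumps_origin.
have := crossing_balance a 0 y t; have := right_jumps_within_budget (IH y).
by rewrite at_y (_ : y%:Z + 1 = y.+1) ?spent //; lia.
Qed.

(* If Z^+_N = 0, site N has budget 0 and the walk stays below it. *)
Lemma walk_below (N : nat) : Zplus a 1 N = 0%N -> forall t, walk a 0 t < N%:Z.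
Proof.
move=> extinct.
have not_at_N t : walk a 0 t != N%:Z.
  apply/eqP => at_N; have := visits_within_budget t.+1 N.
  by rewrite /budget extinct zero_pos0 //= at_N eqxx addn1.
elim=> [|t IH]; first by have := not_at_N 0%N; rewrite /walk /=; lia.
by have := not_at_N t.+1; rewrite walk_step /=; case: (a _ _); lia.
Qed.

(* Confined with bounded local times, the walk could not run forever. *)
Lemma Zplus_survives n : Zplus a 1 n <> 0%N.
Proof.
move=> extinct; set B := (\sum_(0 <= y < n) budget a y)%N.
have confined j : (j < B.+1)%N -> 0 <= walk a 0 j < n%:Z.
  by move=> _; rewrite walk_nonneg walk_below.
have := visits_sum confined.
have : (\sum_(0 <= y < n) visits a 0 y B.+1 <= B)%N.
  by apply: leq_sum => y _; apply: visits_within_budget.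
lia.
Qed.
End ExtinctionImpliesHit.

Lemma hit_of_Zplus_extinct a :
  nondeg_env a -> (exists n, Zplus a 1 n = 0%N) -> hits a 0 (-1)%R.
Proof.
move=> a_nondeg [n extinct]; apply: NNPP => no_hit.
apply: (Zplus_survives a_nondeg _ extinct) => t.
by apply/eqP => hit; apply: no_hit; exists t.
Qed.

Section Mirror.
Local Open Scope ring_scope.

Definition mirror (a : arrow_env) : arrow_env := fun y k => ~~ a (- y) k.

Lemma walk_path_mirror a x n : walk_path (mirror a) (- x) n = map -%R (walk_path a x n).
Proof.
elim: n => [//|n IH]; rewrite [LHS]/= [in RHS]/= IH map_rcons last_map count_map.
set y := last x (walk_path a x n); congr rcons.
rewrite (eq_count (a2 := pred1 y)) => [|z /=]; last by rewrite eqr_opp.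
by rewrite /mirror opprK; case: (a y _) => /=; lia.
Qed.

Lemma walk_mirror a x n : walk (mirror a) (- x) n = - walk a x n.
Proof. by rewrite /walk walk_path_mirror last_map. Qed.

Lemma hits_mirror a x m : hits (mirror a) (- x) (- m) <-> hits a x m.
Proof.
split=> -[t hit]; exists t; last by rewrite walk_mirror hit.
by apply: oppr_inj; rewrite -walk_mirror.
Qed.

Lemma nondeg_mirror a : nondeg_env a -> nondeg_env (mirror a).
Proof.
move=> a_nondeg y N; have [i [le_Ni [i_pos switch]]] := a_nondeg (- y) N.
by exists i; do !split => //; rewrite /mirror => /negb_inj.
Qed.
End Mirror.

Lemma Uminus_negate b m : Uminus b m = Uplus (fun k => ~~ b k) m.
Proof.
have cnt_negate v j : cnt_before (fun k => ~~ b k) v j = cnt_before b (~~ v) j.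
  by apply: eq_bigr => i _; case: (b i); case: v.
case: m => [//|m] /=; rewrite cnt_negate; congr (cnt_before _ _ (epsilon _ _)).
apply: functional_extensionality => j; apply: propositional_extensionality.
by rewrite /is_xth cnt_negate; split=> -[j_pos [bj cnt]]; do !split => //; case: (b j) bj.
Qed.

Lemma Zminus_mirror a y n : Zminus a y n = Zplus (mirror a) y n.
Proof. by elim: n => [//|n IH] /=; rewrite IH Uminus_negate. Qed.

Lemma hit_iff_Zplus_extinct a :
  nondeg_env a -> hits a 0 (-1)%R <-> exists n, Zplus a 1 n = 0%N.
Proof.
by move=> a_nondeg; split; [exact: Zplus_extinct_of_hit|exact: hit_of_Zplus_extinct].
Qed.

Theorem theorem2p4 (a : arrow_env) (Ha : nondeg_env a) :
  (hits a 0 (-1)%R <-> exists n, Zplus a 1 n = 0%N) /\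
  (hits a 0 1%R <-> exists n, Zminus a 1 n = 0%N).
Proof.
split; first exact: hit_iff_Zplus_extinct.
rewrite -hits_mirror oppr0 hit_iff_Zplus_extinct; last exact: nondeg_mirror.
by split=> -[n extinct]; exists n; rewrite Zminus_mirror in extinct *.
Qed.
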